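(* Let $Q(z)\not\equiv0$ be a $k\times k$ Hermite matrix of Laurent polynomials that is diagonally dominant and satisfies $\operatorname{len}(Q_{1,1})\le\dots\le\operatorname{len}(Q_{k,k})$. Let $b(z)$ be a column vector of $k$ Laurent polynomials such that $\operatorname{ldeg}(b_\ell)\ge\operatorname{ldeg}(Q_{\ell,\ell})$ for every $\ell$ with $b_\ell\not\equiv0$. Then there exists a column vector $X(z)$ of $k$ Laurent polynomials such that $Y(z):=b(z)-Q(z)X(z)$ satisfies, for all $\ell=1,\dots,k$, $$\operatorname{fs}(Y_\ell)\subsetneq\operatorname{fs}(Q_{\ell,\ell})\quad\text{and}\quad\deg(Y_\ell)<\deg(Q_{\ell,\ell}).$$
   Context: For a matrix $U(z)=\sum_kU_kz^k$ of Laurent polynomials, $U^\star(z):=\sum_k\overline{U_k}^Tz^{-k}$; Hermite means $Q^\star=Q$. For a Laurent polynomial $u\not\equiv0$: $\deg(u)$ is its highest degree, $\operatorname{ldeg}(u)$ its lowest degree, $\operatorname{len}(u):=\deg(u)-\operatorname{ldeg}(u)$, $\operatorname{fs}(u):=[\operatorname{ldeg}(u),\deg(u)]$; for $u\equiv0$, $\operatorname{len}(u)=\deg(u):=-\infty$ and $\operatorname{fs}(u):=\emptyset$. A $k\times k$ matrix $Q$ of Laurent polynomials is diagonally dominant at the diagonal entry $s$ if (1) for all $i\ne s$: $\operatorname{fs}(Q_{i,s})\subsetneq\operatorname{fs}(Q_{s,s})$ and $\operatorname{fs}(Q_{s,i})\subsetneq\operatorname{fs}(Q_{s,s})$; (2)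 for all $i>s$: $\deg(Q_{s,i})<\deg(Q_{s,s})$. $Q$ is diagonally dominant if this holds at every diagonal entry. *)

From HB Require Import structures.
From mathcomp Require Import all_boot all_order all_algebra.
Set Implicit Arguments. Unset Strict Implicit. Unset Printing Implicit Defensive.
Import Order.TTheory GRing.Theory Num.Theory.
Local Open Scope ring_scope.

Section Laurent.
Variable C : numClosedFieldType.

(* u = lpoly u (z) * z ^ (lshift u) *)
Record laurent := Laurent { lpoly : {poly C}; lshift : int }.

Definition lcoef (u : laurent) (n : int) : C :=
  match (n - lshift u)%R with Posz i => (lpoly u)`_i | Negz _ => 0 end.

Definition lnull (u : laurent) : bool := lpoly u == 0.

Definition leqv (u v : laurent) : Prop := forall n, lcoef u n = lcoef v n.

Definition lzero : laurent := Laurent 0 0.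
Definition ladd (u v : laurent) : laurent :=
  let s := Order.min (lshift u) (lshift v) in
  Laurent (lpoly u * 'X^(`|lshift u - s|%N) + lpoly v * 'X^(`|lshift v - s|%N)) s.
Definition lopp (u : laurent) : laurent := Laurent (- lpoly u) (lshift u).
Definition lsub (u v : laurent) : laurent := ladd u (lopp v).
Definition lmul (u v : laurent) : laurent :=
  Laurent (lpoly u * lpoly v) (lshift u + lshift v).
(* u^*(z) = sum_k conj(u_k) z^{-k} *)
Definition lstar (u : laurent) : laurent :=
  let p := lpoly u in let d := (size p).-1 in
  Laurent (\poly_(i < size p) (p`_(d - i))^*) (- (lshift u + d%:Z)).

(* deg, ldeg, len for a nonzero u (values for u = 0 handled below) *)
Definition ldeg (u : laurent) : int := lshift u + (find (fun c => c != 0) (lpoly u))%:Z.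
Definition hdeg (u : laurent) : int := lshift u + ((size (lpoly u)).-1)%:Z.
(* deg and len with -oo encoded as None *)
Definition deg (u : laurent) : option int := if lnull u then None else Some (hdeg u).
Definition len (u : laurent) : option int :=
  if lnull u then None else Some (hdeg u - ldeg u).

Definition olt (a b : option int) : bool :=
  match a, b with
  | _, None => false | None, Some _ => true | Some x, Some y => x < y end.
Definition ole (a b : option int) : bool :=
  match a, b with
  | None, _ => true | Some _, None => false | Some x, Some y => x <= y end.

Definition in_fs (u : laurent) (n : int) : bool :=
  ~~ lnull u && (ldeg u <= n <= hdeg u).

Definition fs_ssub (u v : laurent) : Prop :=
  (forall n, in_fs u n -> in_fs v n) /\ (exists n, in_fs v n && ~~ in_fs u n).

Definition lmat (k : nat) := 'I_k -> 'I_k -> laurent.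
Definition lvec (k : nat) := 'I_k -> laurent.

Definition lmulmv (k : nat) (Q : lmat k) (X : lvec k) : lvec k :=
  fun i => \big[ladd/lzero]_(j < k) lmul (Q i j) (X j).

Definition hermite (k : nat) (Q : lmat k) : Prop :=
  forall i j, leqv (lstar (Q j i)) (Q i j).

Definition diag_dominant_at (k : nat) (Q : lmat k) (s : 'I_k) : Prop :=
  (forall i, i != s -> fs_ssub (Q i s) (Q s s) /\ fs_ssub (Q s i) (Q s s)) /\
  (forall i : 'I_k, (s < i)%N -> olt (deg (Q s i)) (deg (Q s s))).

Definition diag_dominant (k : nat) (Q : lmat k) : Prop :=
  forall s, diag_dominant_at Q s.

End Laurent.

From Pilot Require Import Defs.
From HB Require Import structures.
From mathcomp Require Import all_boot all_order all_algebra.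
From mathcomp Require Import zify.
Set Implicit Arguments.
Unset Strict Implicit.
Unset Printing Implicit Defensive.
Import Order.TTheory GRing.Theory Num.Theory.
Local Open Scope ring_scope.

(* Multiplying by a large power z^N turns every entry into a polynomial, and the
   claim becomes a reduction of b modulo the columns of Q.  The coefficient of
   Q_jj at deg Q_jj is nonzero, so a monomial multiple of column j cancels the
   coefficient of b_j at deg Q_jj + M.  In row i that column reaches at most
   deg Q_ii + M, and only strictly less when i < j (condition (2) of diagonal
   dominance); hence sweeping j = 1, ..., k lowers the level M by one.  All
   coefficients stay at or above ldeg Q_ii by condition (1) and the hypothesis
   on b. *)

Section LaurentCoefficients.
Variable C : numClosedFieldType.
Implicit Types (u v : laurent C) (n : int).

(* z^N u(z) as a polynomial, valid when N >= - lshift u. *)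
Definition ltopoly (N : nat) u : {poly C} :=
  lpoly u * 'X^(absz (Defs.lshift u + N%:Z)).

Lemma coef_ltopoly u (N m : nat) :
  0 <= Defs.lshift u + N%:Z -> (ltopoly N u)`_m = lcoef u (m%:Z - N%:Z).
Proof.
move=> uN; rewrite /lcoef coefMXn; case: ltnP => hm.
  have : m%:Z - N%:Z - Defs.lshift u < 0 by lia.
  by case: (m%:Z - N%:Z - Defs.lshift u) => // x; lia.
by have -> : m%:Z - N%:Z - Defs.lshift u = Posz (m - absz (Defs.lshift u + N%:Z)) by lia.
Qed.

Lemma lcoef_lt_lshift u n : n < Defs.lshift u -> lcoef u n = 0.
Proof.
rewrite /lcoef => ltn; have : n - Defs.lshift u < 0 by lia.
by case: (n - Defs.lshift u) => // x; lia.
Qed.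

Lemma lcoef0 n : lcoef (lzero C) n = 0.
Proof. by rewrite /lcoef; case: (n - 0) => x; rewrite ?coef0. Qed.

Lemma lcoefN u n : lcoef (lopp u) n = - lcoef u n.
Proof. by rewrite /lcoef /=; case: (n - Defs.lshift u) => x; rewrite ?coefN ?oppr0. Qed.

Lemma lcoefD u v n : lcoef (ladd u v) n = lcoef u n + lcoef v n.
Proof.
pose N := (absz (Defs.lshift u) + absz (Defs.lshift v) + absz n)%N.
have -> : n = (absz (n + N%:Z))%:Z - N%:Z by lia.
have su : 0 <= Defs.lshift u + N%:Z by lia.
have sv : 0 <= Defs.lshift v + N%:Z by lia.
have suv : 0 <= Defs.lshift (ladd u v) + N%:Z.
  by rewrite /= /Order.min; case: ifP => _; lia.
rewrite -!coef_ltopoly // -coefD /ltopoly /= mulrDl -!mulrA -!exprD.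
by congr ((_ * 'X^_ + _ * 'X^_)`__); rewrite /Order.min; case: ifP => hc; lia.
Qed.

Lemma lcoefB u v n : lcoef (lsub u v) n = lcoef u n - lcoef v n.
Proof. by rewrite lcoefD lcoefN. Qed.

Lemma lcoef_sum (I : finType) (F : I -> laurent C) n :
  lcoef (\big[@ladd C/lzero C]_i F i) n = \sum_i lcoef (F i) n.
Proof. exact: (big_morph (fun u => lcoef u n) (fun u v => lcoefD u v n) (lcoef0 n)). Qed.

Lemma coef_ltopolyM u (p : {poly C}) (N m : nat) :
  0 <= Defs.lshift u + N%:Z ->
  lcoef (lmul u (Laurent p 0)) (m%:Z - N%:Z) = (ltopoly N u * p)`_m.
Proof.
by move=> uN; rewrite -coef_ltopoly /ltopoly /= ?addr0 1?mulrAC.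
Qed.

Lemma lcoef_residual k (Q : lmat C k) (b : lvec C k) (x : 'I_k -> {poly C}) i (N m : nat) :
  (forall j, 0 <= Defs.lshift (Q i j) + N%:Z) -> 0 <= Defs.lshift (b i) + N%:Z ->
  lcoef (lsub (b i) (lmulmv Q (fun j => Laurent (x j) 0) i)) (m%:Z - N%:Z) =
  (ltopoly N (b i) - \sum_j ltopoly N (Q i j) * x j)`_m.
Proof.
move=> QN bN; rewrite lcoefB /lmulmv lcoef_sum coefB coef_sum coef_ltopoly //.
by congr (_ - _); apply: eq_bigr => j _; apply: coef_ltopolyM.
Qed.

Lemma lcoef_neq0_nnull u n : lcoef u n != 0 -> ~~ lnull u.
Proof.
rewrite /lcoef /lnull; case: (n - Defs.lshift u) => i; last by rewrite eqxx.
by apply: contra => /eqP ->; rewrite coef0.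
Qed.

Lemma ldeg_le_lcoef u n : lcoef u n != 0 -> ldeg u <= n.
Proof.
rewrite /lcoef /ldeg; set f := find _ _.
case E: (n - Defs.lshift u) => [i|i]; last by rewrite eqxx.
move=> nz; have : (f <= i)%N.
  by rewrite leqNgt; apply/negP => /(before_find 0); rewrite nz.
lia.
Qed.

Lemma lcoef_le_hdeg u n : lcoef u n != 0 -> n <= hdeg u.
Proof.
rewrite /lcoef /hdeg; case E: (n - Defs.lshift u) => [i|i]; last by rewrite eqxx.
move=> nz; have : (i < size (lpoly u))%N.
  by rewrite ltnNge; apply: contra nz => /leq_sizeP ->.
lia.
Qed.

Lemma lshift_le_lcoef u n : lcoef u n != 0 -> Defs.lshift u <= n.
Proof. by apply: contraNT; rewrite -ltNge => /lcoef_lt_lshift ->. Qed.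

Lemma lcoef_ldeg_neq0 u : ~~ lnull u -> lcoef u (ldeg u) != 0.
Proof.
rewrite /lnull /lcoef /ldeg => nz.
set f := find _ (lpoly u).
have -> : Defs.lshift u + f%:Z - Defs.lshift u = Posz f by lia.
apply: (@nth_find _ 0 (fun c => c != 0)); apply/hasP.
exists (lead_coef (lpoly u)); last by rewrite lead_coef_eq0.
by rewrite lead_coefE mem_nth // prednK ?size_poly_gt0.
Qed.

Lemma lcoef_hdeg_neq0 u : ~~ lnull u -> lcoef u (hdeg u) != 0.
Proof.
rewrite /lnull /lcoef /hdeg => nz.
have -> : Defs.lshift u + ((size (lpoly u)).-1)%:Z - Defs.lshift u =
  Posz (size (lpoly u)).-1 by lia.
by rewrite -lead_coefE lead_coef_eq0.
Qed.

Lemma fs_ssub_nnull u v : fs_ssub u v -> ~~ lnull v.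
Proof. by case=> _ [n /andP[/andP[]]]. Qed.

Lemma fs_ssub_lcoef u v n :
  fs_ssub u v -> lcoef u n != 0 -> ldeg v <= n <= hdeg v.
Proof.
case=> sub _ nz; have /andP[] // : in_fs v n.
by apply: sub; rewrite /in_fs (lcoef_neq0_nnull nz) ldeg_le_lcoef ?lcoef_le_hdeg.
Qed.

Lemma olt_deg_lcoef u v n :
  ~~ lnull v -> olt (deg u) (deg v) -> lcoef u n != 0 -> n < hdeg v.
Proof.
rewrite /deg => /negbTE -> + nz; rewrite (negbTE (lcoef_neq0_nnull nz)) /=.
by have := lcoef_le_hdeg nz; apply: le_lt_trans.
Qed.

Lemma fs_ssub_olt_deg_of_lcoef u v :
  ~~ lnull v -> (forall n, lcoef u n != 0 -> ldeg v <= n < hdeg v) ->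
  fs_ssub u v /\ olt (deg u) (deg v).
Proof.
move=> nnv supp.
have vv : ldeg v <= hdeg v by apply/ldeg_le_lcoef/lcoef_hdeg_neq0.
have top : in_fs v (hdeg v) by rewrite /in_fs nnv vv lexx.
have [nu|nnu] := boolP (lnull u).
  rewrite /deg nu (negbTE nnv); split=> //.
  by split=> [n|]; [rewrite /in_fs nu | exists (hdeg v); rewrite top /in_fs nu].
have /andP[lo _] := supp _ (lcoef_ldeg_neq0 nnu).
have /andP[_ hi] := supp _ (lcoef_hdeg_neq0 nnu).
rewrite /deg (negbTE nnu) (negbTE nnv) /=; split=> //; split.
  move=> n; rewrite /in_fs nnu nnv /= => /andP[ln nh].
  by rewrite (le_trans lo ln) (le_trans nh (ltW hi)).
by exists (hdeg v); rewrite top /in_fs nnu /= [hdeg v <= _]leNgt hi andbF.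
Qed.

End LaurentCoefficients.

Lemma coefMZXn (R : comNzRingType) (p : {poly R}) c M n :
  (p * (c *: 'X^M))`_n = if (n < M)%N then 0 else c * p`_(n - M).
Proof. by rewrite -scalerAr coefZ coefMXn; case: ifP; rewrite ?mulr0. Qed.

Lemma coefMZXn_neq0 (R : idomainType) (p : {poly R}) c M n :
  (p * (c *: 'X^M))`_n != 0 -> (M <= n)%N /\ p`_(n - M) != 0.
Proof.
rewrite coefMZXn; case: ltnP => [_|Mn]; first by rewrite eqxx.
by rewrite mulf_eq0 negb_or => /andP[].
Qed.

Lemma coefB_neq0 (R : nzRingType) (p q : {poly R}) n :
  (p - q)`_n != 0 -> p`_n != 0 \/ q`_n != 0.
Proof.
rewrite coefB; have [-> | ] := eqVneq p`_n 0; last by left.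
by rewrite sub0r oppr_eq0; right.
Qed.

Section PolynomialReduction.
Variables (F : fieldType) (k : nat) (P : 'I_k -> 'I_k -> {poly F}) (a h : 'I_k -> nat).
Hypothesis P_diag : forall i, (P i i)`_(h i) != 0.
Hypothesis P_row : forall i j n, (P i j)`_n != 0 -> (a i <= n <= h i)%N.
Hypothesis P_upper_lt : forall (i j : 'I_k) n, (i < j)%N -> (P i j)`_n != 0 -> (n < h i)%N.
Implicit Types (R : 'I_k -> {poly F}) (t : 'I_k -> nat).

Definition supp_ge R := forall i n, (R i)`_n != 0 -> (a i <= n)%N.
Definition supp_lt R t := forall i n, (R i)`_n != 0 -> (n < t i)%N.

Definition reducible R := exists x : 'I_k -> {poly F},
  forall i n, (R i - \sum_j P i j * x j)`_n != 0 -> (a i <= n < h i)%N.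

Lemma reducible_supp R : supp_ge R -> supp_lt R h -> reducible R.
Proof.
move=> geR ltR; exists (fun=> 0) => i n.
by rewrite big1 ?subr0 => [nz|j _]; rewrite ?mulr0 // geR ?ltR.
Qed.

Lemma reducible_subr_col R j m : reducible (fun i => R i - P i j * m) -> reducible R.
Proof.
case=> x red; exists (fun l => x l + (if l == j then m else 0)) => i n.
suff -> : R i - \sum_l P i l * (x l + (if l == j then m else 0)) =
          R i - P i j * m - \sum_l P i l * x l by apply: red.
have col : \sum_l P i l * (if l == j then m else 0) = P i j * m.
  by rewrite (bigD1 j) //= eqxx big1 ?addr0 // => l /negbTE ->; rewrite mulr0.
by rewrite (eq_bigr _ (fun l _ => mulrDr _ _ _)) big_split /= col opprD addrA addrAC.
Qed.

(* Rows i < j keep their bound because P i j stays below h i. *)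
Lemma supp_elim_col R M j (lt_jk : (j < k)%N) :
  let j0 := Ordinal lt_jk in
  let m := ((R j0)`_(h j0 + M) / (P j0 j0)`_(h j0)) *: 'X^M in
  let R' i := R i - P i j0 * m in
  supp_ge R -> supp_lt R (fun i => h i + M + (j <= i))%N ->
  supp_ge R' /\ supp_lt R' (fun i => h i + M + (j < i))%N.
Proof.
move=> j0 m R' geR ltR; split=> i n.
  by case/coefB_neq0 => [/geR // | /coefMZXn_neq0 [Mn /P_row/andP[]]]; lia.
have [-> {i} | nij] := eqVneq i j0.
  move=> nz; have nenh : n != (h j0 + M)%N.
    apply: contraNneq nz => ->.
    by rewrite coefB coefMZXn ltnNge leq_addl /= addnK mulfVK ?subrr.
  by case/coefB_neq0: nz => [/ltR | /coefMZXn_neq0 [Mn /P_row/andP[]]] /=; lia.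
have {}nij : (i : nat) != j by [].
case/coefB_neq0 => [/ltR | /coefMZXn_neq0 [Mn nz]]; first lia.
case: (ltnP i j) => [ij | ji]; first by have := @P_upper_lt i j0 _ ij nz; lia.
by have /andP[] := P_row nz; lia.
Qed.

Lemma reducible_supp_lt M R : supp_ge R -> supp_lt R (fun i => h i + M)%N -> reducible R.
Proof.
elim: M R => [|M IHM] R geR ltR.
  by apply: reducible_supp => // i n /ltR; rewrite addn0.
suff sweep d j R' : (j + d = k)%N -> supp_ge R' ->
    supp_lt R' (fun i => h i + M + (j <= i))%N -> reducible R'.
  by apply: (sweep k 0%N) => // i n /ltR; rewrite addn1 addnS.
elim: d j R' => [|d IHd] j R' jdk geR' ltR'.
  apply: IHM => // i n /ltR'; rewrite addn0 in jdk.
  by rewrite jdk [(k <= _)%N]leqNgt ltn_ord addn0.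
have lt_jk : (j < k)%N by rewrite -jdk addnS ltnS leq_addr.
have [geR'' ltR''] := supp_elim_col lt_jk geR' ltR'.
by apply/reducible_subr_col/(IHd j.+1 _ _ geR'' ltR''); rewrite -jdk addSnnS.
Qed.

Lemma poly_reducible B : supp_ge B -> reducible B.
Proof.
move=> geB; apply: (@reducible_supp_lt (\max_i size (B i))) => // i n nz.
have : (n < size (B i))%N by rewrite ltnNge; apply: contra nz => /leq_sizeP ->.
by move/leq_trans; apply; apply: leq_trans (leq_bigmax i) (leq_addl _ _).
Qed.

End PolynomialReduction.

Section DiagonalDominance.
Variables (C : numClosedFieldType) (k : nat) (Q : lmat C k).
Hypothesis dQ : diag_dominant Q.

Lemma diag_dominant_nnull : (exists i j, ~~ lnull (Q i j)) -> forall s, ~~ lnull (Q s s).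
Proof.
move=> [i0 [j0 nz]] s; case: (pickP (fun i => i != s)) => [i ne | all_s].
  exact: fs_ssub_nnull (proj1 ((dQ s).1 i ne)).
have eq_s l : l = s by apply/eqP/negbFE/all_s.
by rewrite (eq_s i0) (eq_s j0) in nz.
Qed.

Lemma diag_dominant_row_lcoef i j n :
  lcoef (Q i j) n != 0 -> ldeg (Q i i) <= n <= hdeg (Q i i).
Proof.
move=> nz; have [eji|nji] := eqVneq j i.
  by rewrite eji in nz; rewrite ldeg_le_lcoef ?lcoef_le_hdeg.
exact: fs_ssub_lcoef (proj2 ((dQ i).1 j nji)) nz.
Qed.

Lemma diag_dominant_upper_lcoef (i j : 'I_k) n :
  (i < j)%N -> lcoef (Q i j) n != 0 -> n < hdeg (Q i i).
Proof.
move=> ij; have nji : j != i by apply: contraTneq ij => ->; rewrite ltnn.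
exact: olt_deg_lcoef (fs_ssub_nnull (proj2 ((dQ i).1 j nji))) ((dQ i).2 j ij).
Qed.

End DiagonalDominance.

Lemma exists_shift_bound (C : numClosedFieldType) k (Q : lmat C k) (b : lvec C k)
    (lo : 'I_k -> int) :
  exists N : nat, [/\ forall i j, 0 <= Defs.lshift (Q i j) + N%:Z,
    forall i, 0 <= Defs.lshift (b i) + N%:Z & forall i, 0 <= lo i + N%:Z].
Proof.
pose B i := (`|lo i| + `|Defs.lshift (b i)| + \max_j `|Defs.lshift (Q i j)|)%N.
exists (\max_i B i); split=> [i j | i | i]; have := leq_bigmax (F := B) i; rewrite /B.
- by have := leq_bigmax (F := fun j => `|Defs.lshift (Q i j)|%N) j; lia.
- lia.
- lia.
Qed.

Lemma laurent_reduce (C : numClosedFieldType) k (Q : lmat C k) (b : lvec C k)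
    (lo hi : 'I_k -> int) :
  (forall i, lcoef (Q i i) (hi i) != 0) ->
  (forall i j n, lcoef (Q i j) n != 0 -> lo i <= n <= hi i) ->
  (forall (i j : 'I_k) n, (i < j)%N -> lcoef (Q i j) n != 0 -> n < hi i) ->
  (forall i n, lcoef (b i) n != 0 -> lo i <= n) ->
  exists X : lvec C k, forall i n,
    lcoef (lsub (b i) (lmulmv Q X i)) n != 0 -> lo i <= n < hi i.
Proof.
move=> Q_hi Q_row Q_upper b_lo.
have [N [QN bN loN]] := exists_shift_bound Q b lo.
have hiN i : 0 <= hi i + N%:Z by have := lshift_le_lcoef (Q_hi i); have := QN i i; lia.
pose a i := absz (lo i + N%:Z); pose h i := absz (hi i + N%:Z).
have aE i : (a i)%:Z = lo i + N%:Z := gez0_abs (loN i).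
have hE i : (h i)%:Z = hi i + N%:Z := gez0_abs (hiN i).
pose P i j := ltopoly N (Q i j).
have P_diag i : (P i i)`_(h i) != 0.
  by rewrite coef_ltopoly // hE addrK.
have P_row i j n : (P i j)`_n != 0 -> (a i <= n <= h i)%N.
  by rewrite coef_ltopoly // => /Q_row; have := aE i; have := hE i; lia.
have P_upper (i j : 'I_k) n : (i < j)%N -> (P i j)`_n != 0 -> (n < h i)%N.
  by move=> ij; rewrite coef_ltopoly // => /(Q_upper _ _ _ ij); have := hE i; lia.
have B_ge i n : (ltopoly N (b i))`_n != 0 -> (a i <= n)%N.
  by rewrite coef_ltopoly // => /b_lo; have := aE i; lia.
have [x red] := poly_reducible P_diag P_row P_upper B_ge.
exists (fun j => Laurent (x j) 0) => i n.
have [nN|nN] := ltP (n + N%:Z) 0.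
  rewrite lcoefB /lmulmv lcoef_sum lcoef_lt_lshift; last by have := bN i; lia.
  rewrite big1 ?subr0 ?eqxx // => j _.
  by rewrite lcoef_lt_lshift //=; have := QN i j; lia.
have -> : n = (absz (n + N%:Z))%:Z - N%:Z by lia.
by rewrite lcoef_residual // => /red; have := aE i; have := hE i; lia.
Qed.

Theorem lemmaA1 (C : numClosedFieldType) (k : nat) (Q : lmat C k) (b : lvec C k) :
  (exists i j, ~~ lnull (Q i j)) ->
  hermite Q ->
  diag_dominant Q ->
  (forall i j : 'I_k, (i <= j)%N -> ole (len (Q i i)) (len (Q j j))) ->
  (forall l, ~~ lnull (b l) -> ldeg (Q l l) <= ldeg (b l)) ->
  exists X : lvec C k,
    forall l, let Y := lsub (b l) (lmulmv Q X l) in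
      fs_ssub Y (Q l l) /\ olt (deg Y) (deg (Q l l)).
Proof.
move=> nzQ _ dQ _ b_ldeg.
have Q_nnull := diag_dominant_nnull dQ nzQ.
have b_lo l n : lcoef (b l) n != 0 -> ldeg (Q l l) <= n.
  by move=> nz; apply: le_trans (b_ldeg l (lcoef_neq0_nnull nz)) (ldeg_le_lcoef nz).
have [X red] := laurent_reduce (fun i => lcoef_hdeg_neq0 (Q_nnull i))
  (diag_dominant_row_lcoef dQ) (diag_dominant_upper_lcoef dQ) b_lo.
by exists X => l; apply: fs_ssub_olt_deg_of_lcoef (Q_nnull l) (red l).
Qed.
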